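(* For any MeanEstimation algorithm (possibly using shared randomness) in which any machine receives at most $b$ bits, there is a valid input for which $\mathbb{E}[\|\mathbf{EST}-\boldsymbol\mu\|^2]=\Omega\!\left(y^2\,2^{-2b/d}\right)$.
   Context: MeanEstimation: there are $n$ machines; machine $v$ receives $\mathbf{x}_v\in\mathbb{R}^d$, and all receive a common $y$ with $\|\mathbf{x}_u-\mathbf{x}_v\|\le y$ for all $u,v$. All machines must output the same $\mathbf{EST}\in\mathbb{R}^d$ with $\mathbb{E}[\mathbf{EST}]=\boldsymbol\mu=\frac1n\sum_v\mathbf{x}_v$. $\|\cdot\|$ is a fixed one of the $\ell_1,\ell_2,\ell_\infty$ norms. Algorithms may use a common random string available to all machines. Bits received by a machine count all bits it receives from any source during the algorithm, and the bound $b$ holds with certainty. The hidden constant is absolute. *)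

From HB Require Import structures.
From mathcomp Require Import all_boot all_order all_algebra.
From mathcomp Require Import all_classical all_reals all_analysis.
Set Implicit Arguments. Unset Strict Implicit. Unset Printing Implicit Defensive.
Import Order.TTheory GRing.Theory Num.Theory.
Local Open Scope ring_scope.

Inductive normkind := L1 | L2 | Linf.

Definition vnorm (R : realType) (d : nat) (k : normkind) (v : 'rV[R]_d) : R :=
  match k with
  | L1 => \sum_(i < d) `|v 0 i|
  | L2 => Num.sqrt (\sum_(i < d) (v 0 i) ^+ 2)
  | Linf => \big[Num.max/0]_(i < d) `|v 0 i|
  end.

Definition meanv (R : realType) (n d : nat) (x : 'I_n -> 'rV[R]_d) : 'rV[R]_d :=
  (n%:R)^-1 *: \sum_(v < n) x v.

Definition valid_input (R : realType) (n d : nat) (k : normkind) (y : R)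
  (x : 'I_n -> 'rV[R]_d) : Prop :=
  forall u v : 'I_n, vnorm k (x u - x v) <= y.

From HB Require Import structures.
From mathcomp Require Import all_boot all_order all_algebra.
From mathcomp Require Import all_classical all_reals all_analysis.
From mathcomp Require Import measurable_realfun.
From mathcomp Require Import ring lra zify.
Set Implicit Arguments. Unset Strict Implicit. Unset Printing Implicit Defensive.
Import Order.TTheory GRing.Theory Num.Theory.
Local Open Scope ring_scope.

(* Let one machine hold 0 and all the others a common point a * s of the grid
   {0, ..., m - 1}^d, m = 48 * 2^(b / d), with the largest spacing a keeping
   every such input valid; the mean is then c * s, c = a (n - 1) / n >= a / 2.
   Fix the common random string. The machine holding 0 sees at most b bits, so
   it has at most 2^(b + 1) possible outputs. If an output p is within
   c * |(1, ..., 1)| of c * s, then rounding p / c coordinatewise to the grid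
   lands within l1-distance 2d of s, and a generating-function count shows
   that at most 12^d grid points are that close to a given point. As
   2^(b + 1) 12^d <= m^d / 2, at least half of the grid inputs have squared
   error >= (c * |(1, ..., 1)|)^2; averaging over the grid and integrating
   over the random string yields one input with expected squared error
   Omega(y^2 4^(-b/d)). *)

Lemma sum_halfpow_distn_le3 (R : realFieldType) (u m : nat) :
  \sum_(v < m) (2^-1 : R) ^+ `|u - v| <= 3.
Proof.
have half_ge0 : (0 : R) <= 2^-1 by rewrite invr_ge0.
have partial : \sum_(v < m) (2^-1 : R) ^+ `|u - v| <=
    if (m <= u)%N then 2^-1 ^+ (u - m) else 3 - 2 * 2^-1 ^+ (m - u).
  elim: m => [|m IH]; first by rewrite big_ord0 exprn_ge0.
  rewrite big_ord_recr /=; case: (ltngtP m u) => hmu.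
  - rewrite (ltnW hmu) in IH; rewrite distnEl ?(ltnW hmu) //.
    have e : (u - m = (u - m.+1).+1)%N by lia.
    rewrite e exprS in IH *; lra.
  - rewrite leqNgt hmu /= in IH; rewrite distnEr ?(ltnW hmu) //.
    have -> : (m.+1 - u = (m - u).+1)%N by lia.
    rewrite exprS; lra.
  - subst m; rewrite leqnn subnn expr0 in IH.
    rewrite distnn subSnn expr0 expr1; lra.
apply: le_trans partial _; case: ifP => _.
  by apply: le_trans (_ : 1 <= 3); [apply: exprn_ile1 => //; lra | lra].
have : 0 <= (2^-1 : R) ^+ (m - u) by rewrite exprn_ge0.
lra.
Qed.

Lemma card_set_has_le (I : Type) (T : finType) (r : seq I) (A : I -> {set T}) :
  (#|[set t | has (fun i => t \in A i) r]| <= \sum_(i <- r) #|A i|)%N.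
Proof.
elim: r => [|i r IH]; first by rewrite big_nil leqn0 cards_eq0; apply/eqP/setP.
have -> : [set t | has (fun j => t \in A j) (i :: r)] =
          A i :|: [set t | has (fun j => t \in A j) r].
  by apply/setP => t; rewrite !inE.
by rewrite big_cons; apply: leq_trans (leq_card_setU _ _) (leq_add _ IH).
Qed.

Fixpoint bitstrings (b : nat) : seq (seq bool) :=
  if b is b'.+1 then [::] :: [seq x :: s | x <- [:: true; false], s <- bitstrings b']
  else [:: [::]].

Lemma size_bitstrings b : (size (bitstrings b) < 2 ^ b.+1)%N.
Proof. elim: b => [|b IH] //=; rewrite !size_cat !size_map addn0 expnS; lia. Qed.

Lemma mem_bitstrings b (s : seq bool) : (size s <= b)%N -> s \in bitstrings b.
Proof.
elim: b s => [|b IH] [|x s] // hs; rewrite in_cons; apply/orP; right.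
by apply/allpairsP; exists (x, s); rewrite IH //; case: (x).
Qed.

Section Grid.
Variables d m : nat.
Local Notation grid := {ffun 'I_d -> 'I_m}.

Definition grid_dist (u : 'I_d -> nat) (s : grid) : nat := \sum_j `|u j - s j|.

Lemma card_grid_ball (u : 'I_d -> nat) :
  (#|[set s : grid | grid_dist u s < 2 * d]| <= 12 ^ d)%N.
Proof.
set B := [set s | _].
(* Every point of the ball has weight at least [4^-d], while the total weight
   factors into [d] sums [\sum_v 2^-|u j - v|], each at most [3]. *)
pose w (s : grid) : rat := \prod_j 2^-1 ^+ `|u j - s j|.
have w_ball s : s \in B -> 4^-1 ^+ d <= w s.
  rewrite inE => hs; rewrite /w prodrXr.
  have -> : (4^-1 : rat) = 2^-1 ^+ 2 by [].
  by rewrite -exprM; apply: ler_wiXn2l => //; apply: ltnW.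
have w_sum : \sum_s w s <= 3 ^+ d.
  rewrite /w -(bigA_distr_bigA (fun j (v : 'I_m) => (2^-1 : rat) ^+ `|u j - v|)).
  rewrite -[X in _ <= _ ^+ X](card_ord d) -prodr_const.
  apply: ler_prod => j _; rewrite sum_halfpow_distn_le3 andbT.
  by apply: sumr_ge0 => v _; apply: exprn_ge0.
have : (#|B|%:R : rat) * 4^-1 ^+ d <= 3 ^+ d.
  apply: le_trans w_sum; rewrite -sum1_card natr_sum mulr_suml.
  apply: le_trans (_ : \sum_(s in B) w s <= _).
    by apply: ler_sum => s /w_ball; rewrite mul1r.
  rewrite [X in _ <= X](bigID (mem B)) /= lerDl.
  by apply: sumr_ge0 => s _; apply: prodr_ge0 => j _; apply: exprn_ge0.
rewrite -ler_pdivlMr ?exprn_gt0 // -exprVn invrK -exprMn.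
by rewrite (_ : 3 * 4 = 12%:R) // -natrX ler_nat.
Qed.

Lemma card_near_decoded (b : nat) (F : grid -> seq bool) (D : seq bool -> 'I_d -> nat) :
  (forall s, size (F s) <= b)%N ->
  (#|[set s | grid_dist (D (F s)) s < 2 * d]| <= 2 ^ b.+1 * 12 ^ d)%N.
Proof.
move=> hF.
pose ball q := [set s : grid | grid_dist (D q) s < 2 * d]%N.
apply: leq_trans (_ : #|[set s | has (fun q => s \in ball q) (bitstrings b)]| <= _)%N.
  apply: subset_leq_card; apply/fintype.subsetP => s; rewrite !inE => hs.
  by apply/hasP; exists (F s); rewrite ?mem_bitstrings ?inE.
apply: leq_trans (card_set_has_le _ _) _.
apply: leq_trans (_ : \sum_(q <- bitstrings b) 12 ^ d <= _)%N.
  by apply: leq_sum => q _; apply: card_grid_ball.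
rewrite big_const_seq count_predT iter_addn_0 mulnC.
by apply: leq_mul => //; apply: ltnW (size_bitstrings b).
Qed.

End Grid.

Section Norms.
Variables (R : realType) (d : nat) (k : normkind).

Definition vnorm_ones : R :=
  match k with L1 => d%:R | L2 => Num.sqrt d%:R | Linf => 1 end.

Lemma vnorm_ones_gt0 : (0 < d)%N -> 0 < vnorm_ones.
Proof. by move=> d0; rewrite /vnorm_ones; case: k; rewrite ?sqrtr_gt0 ?ltr0n. Qed.

Lemma vnorm_le_ones (w : 'rV[R]_d) (B : R) :
  0 <= B -> (forall j, `|w 0 j| <= B) -> vnorm k w <= vnorm_ones * B.
Proof.
move=> B0 hw; rewrite /vnorm_ones; case: k => /=.
- rewrite mulr_natl -[X in _ *+ X](card_ord d) -sumr_const; exact: ler_sum.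
- rewrite -(ger0_norm B0) -sqrtr_sqr -sqrtrM // mulr_natl.
  rewrite -[X in _ *+ X](card_ord d) -sumr_const.
  apply: ler_wsqrtr; apply: ler_sum => j _.
  by rewrite -real_normK ?num_real // lerXn2r ?nnegrE // (le_trans _ (hw j)).
- by rewrite mul1r; apply: bigmax_le.
Qed.

Lemma sqr_sum_le_mul_sum_sqr (x : 'I_d -> R) :
  (\sum_j x j) ^+ 2 <= d%:R * \sum_j x j ^+ 2.
Proof.
set S := \sum_j x j; set Q := \sum_j x j ^+ 2.
have inner i : \sum_j (x i - x j) ^+ 2 = x i ^+ 2 *+ d - (x i * S) *+ 2 + Q.
  under eq_bigr do rewrite sqrrB.
  by rewrite !big_split /= sumrN sumr_const card_ord sumrMnl -mulr_sumr.
have : 0 <= \sum_i \sum_j (x i - x j) ^+ 2.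
  by apply: sumr_ge0 => i _; apply: sumr_ge0 => j _; apply: sqr_ge0.
under eq_bigr do rewrite inner.
rewrite !big_split /= sumrN !sumrMnl -mulr_suml sumr_const card_ord -/Q -/S.
by rewrite -expr2 -mulr_natl; lra.
Qed.

Lemma vnorm_ones_mul_sum_le (e : 'rV[R]_d) :
  vnorm_ones * \sum_j `|e 0 j| <= d%:R * vnorm k e.
Proof.
have sum_ge0 : 0 <= \sum_j `|e 0 j| by apply: sumr_ge0.
rewrite /vnorm_ones; case: k => /=.
- by [].
- have cs : (\sum_j `|e 0 j|) ^+ 2 <= d%:R * \sum_j e 0 j ^+ 2.
    have -> : \sum_j e 0 j ^+ 2 = \sum_j `|e 0 j| ^+ 2.
      by apply: eq_bigr => j _; rewrite real_normK ?num_real.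
    exact: sqr_sum_le_mul_sum_sqr.
  rewrite -[X in _ <= X * _](sqr_sqrtr (ler0n R d)) expr2 -mulrA -sqrtrM //.
  apply: ler_wpM2l => //; rewrite -[X in X <= _](ger0_norm sum_ge0) -sqrtr_sqr.
  exact: ler_wsqrtr.
- rewrite mul1r mulr_natl -[X in _ *+ X](card_ord d) -sumr_const.
  by apply: ler_sum => j _; apply: le_bigmax.
Qed.

End Norms.

Lemma natr_distn (R : numDomainType) (u v : nat) :
  (`|u - v|%N)%:R = `|u%:R - v%:R| :> R.
Proof. by rewrite natr_absz intr_norm intrD intrN. Qed.

Section Decoding.
Variables (R : realType) (d m : nat) (i0 : 'I_m).

Definition nearest (c p : R) : 'I_m := [arg min_(u < i0) `|p - c * u%:R|]%O.

Lemma nearest_distn (c p : R) (v : 'I_m) :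
  0 <= c -> c * (`|nearest c p - v|%N)%:R <= 2 * `|p - c * v%:R|.
Proof.
move=> c0; rewrite /nearest; case: arg_minP => // u _ /(_ v isT) near_u.
rewrite natr_distn -[c in c * _](ger0_norm c0) -normrM mulrBr.
have := ler_normD (c * u%:R - p) (p - c * v%:R).
rewrite [X in `|X|](_ : _ = c * u%:R - c * v%:R); last by rewrite addrA subrK.
by rewrite [`|c * u%:R - p|]distrC; lra.
Qed.

Definition grid_row (s : {ffun 'I_d -> 'I_m}) : 'rV[R]_d := \row_j (s j)%:R.

Definition decode (c : R) (p : 'rV[R]_d) (j : 'I_d) : nat := nearest c (p 0 j).

Lemma vnorm_ge_far_from_decoded (k : normkind) (c : R) (p : 'rV[R]_d) s :
  (0 < d)%N -> 0 <= c -> (2 * d <= grid_dist (decode c p) s)%N ->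
  c * vnorm_ones R d k <= vnorm k (p - c *: grid_row s).
Proof.
move=> d0 c0 far; set e := p - c *: grid_row s.
have sum_ge : c * d%:R <= \sum_j `|e 0 j|.
  have : c * (2 * d)%:R <= \sum_j 2 * `|e 0 j|.
    apply: le_trans (_ : c * (grid_dist (decode c p) s)%:R <= _).
      by rewrite ler_wpM2l // ler_nat.
    rewrite natr_sum mulr_sumr; apply: ler_sum => j _.
    by rewrite !mxE; apply: nearest_distn.
  by rewrite -mulr_sumr natrM mulrCA; lra.
rewrite -(@ler_pM2r _ d%:R) ?ltr0n // mulrAC mulrC [X in _ <= X]mulrC.
apply: le_trans (vnorm_ones_mul_sum_le _ _).
by apply: ler_wpM2l => //; rewrite ltW ?vnorm_ones_gt0.
Qed.

End Decoding.

Definition grid_size (b d : nat) : nat := 12 * 2 ^ (b %/ d + 2).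

Lemma grid_size_gt0 b d : (0 < grid_size b d)%N.
Proof. by rewrite muln_gt0 expn_gt0. Qed.

Lemma card_grid_size_ge b d : (0 < d)%N ->
  (2 * (2 ^ b.+1 * 12 ^ d) <= grid_size b d ^ d)%N.
Proof.
move=> d0; rewrite expnMn -expnM mulnA -expnS mulnC leq_mul2l; apply/orP; right.
by apply: leq_pexp2l => //; have := divn_eq b d; have := ltn_pmod b d0; nia.
Qed.

Lemma card_close_estimates (R : realType) (k : normkind) (b d : nat) (c : R)
    (F : {ffun 'I_d -> 'I_(grid_size b d)} -> seq bool) (est : seq bool -> 'rV[R]_d) :
  (0 < d)%N -> 0 <= c -> (forall s, size (F s) <= b)%N ->
  (2 * #|[set s | (vnorm k (est (F s) - c *: grid_row R s) ^+ 2
                     < (c * vnorm_ones R d k) ^+ 2)%R]|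
    <= #|{ffun 'I_d -> 'I_(grid_size b d)}|)%N.
Proof.
move=> d0 c0 hF; pose i0 := Ordinal (grid_size_gt0 b d).
apply: leq_trans (_ : 2 * #|[set s | grid_dist (decode i0 c (est (F s))) s < 2 * d]| <= _)%N.
  rewrite leq_mul2l; apply/orP; right; apply: subset_leq_card.
  apply/fintype.subsetP => s; rewrite !inE; apply: contraTT; rewrite -leqNgt -leNgt => far.
  have cg0 : 0 <= c * vnorm_ones R d k by rewrite mulr_ge0 // ltW // vnorm_ones_gt0.
  have cg_le := vnorm_ge_far_from_decoded k d0 c0 far.
  by rewrite lerXn2r ?nnegrE ?cg0 ?(le_trans cg0 cg_le).
apply: leq_trans (leq_mul (leqnn 2) (card_near_decoded (fun q => decode i0 c (est q)) hF)) _.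
by rewrite card_ffun !card_ord card_grid_size_ge.
Qed.

Section ZeroAtOneMachine.
Variables (R : realType) (n d : nat) (v0 : 'I_n).

Definition zero_at (w : 'rV[R]_d) (v : 'I_n) : 'rV[R]_d := if v == v0 then 0 else w.

Lemma meanv_zero_at (w : 'rV[R]_d) :
  meanv (zero_at w) = ((n - 1)%:R / n%:R) *: w.
Proof.
have n0 : (0 < n)%N by case: n v0 => [[]|].
rewrite /meanv (bigD1 v0) //= /zero_at eqxx add0r.
under eq_bigr => v /negPf -> do [].
by rewrite sumr_const cardC1 card_ord -[w *+ _]scaler_nat scalerA mulrC subn1.
Qed.

Lemma valid_zero_at (k : normkind) (y B : R) (w : 'rV[R]_d) :
  0 <= B -> (forall j, `|w 0 j| <= B) -> vnorm_ones R d k * B <= y ->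
  valid_input k y (zero_at w).
Proof.
move=> B0 hw hy u v; apply: le_trans hy; apply: vnorm_le_ones => // j.
rewrite /zero_at; case: eqP; case: eqP => _ _;
  by rewrite !mxE ?subrr ?sub0r ?subr0 ?normrN ?normr0.
Qed.

End ZeroAtOneMachine.

Definition grid_step (R : realType) (k : normkind) (b d : nat) (y : R) : R :=
  y / (vnorm_ones R d k * (grid_size b d)%:R).

Lemma grid_step_ge0 (R : realType) k b d (y : R) :
  (0 < d)%N -> 0 <= y -> 0 <= grid_step k b d y.
Proof.
by move=> d0 y0; rewrite divr_ge0 // mulr_ge0 // ltW // vnorm_ones_gt0.
Qed.

Lemma valid_grid_input (R : realType) k n b d (v0 : 'I_n) (y : R)
    (s : {ffun 'I_d -> 'I_(grid_size b d)}) :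
  (0 < d)%N -> 0 <= y -> valid_input k y (zero_at v0 (grid_step k b d y *: grid_row R s)).
Proof.
move=> d0 y0; have a0 := grid_step_ge0 k b d0 y0.
apply: (@valid_zero_at R n d v0 k y (grid_step k b d y * (grid_size b d)%:R)).
- by rewrite mulr_ge0.
- move=> j; rewrite !mxE normrM !ger0_norm //.
  by rewrite ler_wpM2l // ler_nat ltnW.
- rewrite /grid_step mulrCA divfK // gt_eqF // mulr_gt0 ?vnorm_ones_gt0 //.
  by rewrite ltr0n grid_size_gt0.
Qed.

Section Measurability.
Variables (R : realType) (dO : measure_display) (Omega : measurableType dO).

Lemma measurable_bigmax (I : Type) (r : seq I) (h : I -> Omega -> R) :
  (forall i, measurable_fun setT (h i)) ->
  measurable_fun setT (fun x => \big[Num.max/0]_(i <- r) h i x).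
Proof.
move=> mh; elim: r => [|i r IH].
  by under eq_fun do rewrite big_nil; apply: measurable_cst.
by under eq_fun do rewrite big_cons; apply: measurable_maxr.
Qed.

Lemma measurable_vnorm_sqr (d : nat) (k : normkind) (f : Omega -> 'rV[R]_d) :
  (forall j, measurable_fun setT (fun x => f x 0 j)) ->
  measurable_fun setT (fun x => vnorm k (f x) ^+ 2).
Proof.
move=> mf; have mnorm j : measurable_fun setT (fun x => `|f x 0 j|).
  change (measurable_fun setT (Num.norm \o (fun x => f x 0 j))).
  by apply: measurableT_comp; [apply: normr_measurable | apply: mf].
case: k => /=.
- by apply: measurable_realfun.measurable_funX; apply: measurable_sum.
- have -> : (fun x => Num.sqrt (\sum_j f x 0 j ^+ 2) ^+ 2) = (fun x => \sum_j f x 0 j ^+ 2).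
    by apply: funext => x; rewrite sqr_sqrtr // sumr_ge0 // => j _; apply: sqr_ge0.
  by apply: measurable_sum => j; apply: measurable_realfun.measurable_funX.
- by apply: measurable_realfun.measurable_funX; apply: measurable_bigmax.
Qed.

End Measurability.

Section Averaging.
Variable R : realType.

Lemma sum_ge_of_few_small (T : finType) (g : T -> R) (E : R) :
  0 <= E -> (forall t, 0 <= g t) -> (2 * #|[set t | (g t < E)%R]| <= #|T|)%N ->
  #|T|%:R / 2 * E <= \sum_t g t.
Proof.
move=> E0 g0; set S := [set t | g t < E] => few.
have large : \sum_(t in ~: S) E <= \sum_t g t.
  apply: le_trans (_ : \sum_(t in ~: S) g t <= _).
    by apply: ler_sum => t; rewrite !inE -leNgt.
  by rewrite [X in _ <= X](bigID (mem (~: S))) /= lerDl sumr_ge0.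
apply: le_trans large; rewrite sumr_const -[E *+ _]mulr_natl ler_wpM2r //.
rewrite ler_pdivrMr // mulr_natr mulr2n -!natrD ler_nat.
by move: few; rewrite -(cardsC S); lia.
Qed.

Local Open Scope ereal_scope.

Lemma exists_ge_average (T : finType) (t0 : T) (F : T -> \bar R) (A : R) :
  (#|T|%:R * A)%:E <= \sum_t F t -> exists t, A%:E <= F t.
Proof.
move=> hsum; exists [arg max_(t > t0) F t]%O.
case: arg_maxP => // tm _ hmax.
have hN : (0 < #|T|)%N by apply/card_gt0P; exists t0.
rewrite -(@lee_pmul2l _ (#|T|%:R)%:E) ?ltr0n ?lte_fin ?ltr0n //.
rewrite -EFinM (le_trans hsum) // mule_natl.
have -> : F tm *+ #|T| = \sum_(t : T) F tm by rewrite sumr_const.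
by apply: lee_sum => t _; apply: hmax.
Qed.

Lemma exists_integral_ge_half (dO : measure_display) (Omega : measurableType dO)
    (P : probability Omega R) (T : finType) (t0 : T) (f : T -> Omega -> R) (E : R) :
  (0 <= E)%R -> (forall t, measurable_fun setT (f t)) -> (forall t x, (0 <= f t x)%R) ->
  (forall x, 2 * #|[set t | (f t x < E)%R]| <= #|T|)%N ->
  exists t, (E / 2)%:E <= \int[P]_x (f t x)%:E.
Proof.
move=> E0 mf f0 few; apply: (exists_ge_average t0).
have mfE t : measurable_fun setT (fun x => (f t x)%:E).
  by apply/measurable_EFinP; apply: mf.
rewrite -ge0_integral_sum // => [|t x _]; last by rewrite lee_fin.
apply: le_trans (_ : \int[P]_x (cst (#|T|%:R * (E / 2))%:E x) <= _).
  rewrite integral_cst // [X in _ <= _ * X](_ : _ = 1) ?mule1 //.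
  exact: probability_setT.
apply: ge0_le_integral => //.
- by move=> x _; rewrite lee_fin mulr_ge0 ?divr_ge0.
- exact: emeasurable_sum.
- by move=> x _; rewrite sumEFin lee_fin mulrA mulrAC sum_ge_of_few_small.
Qed.

End Averaging.

Lemma powR2_le_inv_exp4_div (R : realType) (b d : nat) : (0 < d)%N ->
  powR 2 (- (2 * b%:R / d%:R)) <= ((4 ^ (b %/ d))%:R)^-1 :> R.
Proof.
move=> d0; have -> : (4 ^ (b %/ d))%:R = 2 `^ (2 * (b %/ d))%N%:R :> R.
  by rewrite powR_mulrn // -natrX expnM.
rewrite -powRN; apply: ler_powR; first by rewrite ler1n.
rewrite lerN2 natrM -mulrA ler_wpM2l // ler_pdivlMr ?ltr0n // -natrM ler_nat.
exact: leq_trunc_div.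
Qed.

(* [18432 = 8 * 48 ^ 2]: the grid has [48 * 2 ^ (b %/ d)] points per axis, the
   mean shrinks the grid by [(n - 1) / n >= 1 / 2], and averaging costs [1 / 2]. *)
Lemma grid_error_ge (R : realType) k n b d (y : R) : (2 <= n)%N -> (0 < d)%N ->
  18432%:R^-1 * y ^+ 2 * powR 2 (- (2 * b%:R / d%:R)) <=
  (grid_step k b d y * ((n - 1)%:R / n%:R) * vnorm_ones R d k) ^+ 2 / 2.
Proof.
move=> n2 d0; pose r : R := (n - 1)%:R / n%:R; pose F : R := (4 ^ (b %/ d))%:R.
have F0 : 0 < F by rewrite ltr0n expn_gt0.
have r_ge : 4^-1 <= r ^+ 2.
  have : 2^-1 <= r.
    rewrite ler_pdivlMr ?ltr0n ?(ltnW n2) // natrB ?(ltnW n2) //.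
    by move: n2; rewrite -(ler_nat R); lra.
  by move=> ?; nra.
have -> : (grid_step k b d y * r * vnorm_ones R d k) ^+ 2 / 2 =
          y ^+ 2 / F * (r ^+ 2 / 4608%:R).
  have m2 : (grid_size b d)%:R ^+ 2 = 2304%:R * F :> R.
    rewrite /F -natrX -natrM expnMn -expnM mulnDl expnD mulnC [(_ * 2)%N]mulnC.
    by rewrite expnM -mulnA mulnC.
  have mR0 : (grid_size b d)%:R != 0 :> R by rewrite pnatr_eq0 -lt0n grid_size_gt0.
  have g0 := vnorm_ones_gt0 R k d0.
  have -> : grid_step k b d y * r * vnorm_ones R d k = y * r / (grid_size b d)%:R.
    by rewrite /grid_step; field; rewrite mR0 gt_eqF.
  by rewrite expr_div_n m2 exprMn; field; rewrite gt_eqF.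
apply: le_trans (_ : 18432%:R^-1 * y ^+ 2 * F^-1 <= _).
  by apply: ler_wpM2l; [rewrite mulr_ge0 ?sqr_ge0 | exact: powR2_le_inv_exp4_div].
rewrite (_ : _ * F^-1 = y ^+ 2 / F * 18432%:R^-1); last by ring.
rewrite ler_wpM2l ?divr_ge0 ?sqr_ge0 ?(ltW F0) // [X in _ <= X]mulrC.
rewrite (_ : 18432%:R = 4608%:R * 4 :> R); last by rewrite -natrM.
by rewrite invfM; apply: ler_wpM2l r_ge; rewrite invr_ge0 ler0n.
Qed.

Theorem theorem38 :
  exists c : rat, 0 < c /\
  forall (R : realType) (n d b : nat) (k : normkind) (y : R),
    (2 <= n)%N -> (0 < d)%N -> 0 <= y ->
  forall (dO : measure_display) (Omega : measurableType dO)
         (P : probability Omega R)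
         (recv : 'I_n -> ('I_n -> 'rV[R]_d) -> Omega -> seq bool)
         (out : 'I_n -> 'rV[R]_d -> Omega -> seq bool -> 'rV[R]_d)
         (EST : ('I_n -> 'rV[R]_d) -> Omega -> 'rV[R]_d),
    (* at most b bits received by any machine, with certainty *)
    (forall x, valid_input k y x ->
       forall (v : 'I_n) (r : Omega), (size (recv v x r) <= b)%N) ->
    (* every machine outputs EST, computed from its own input, the common
       random string and the bits it received *)
    (forall x, valid_input k y x ->
       forall (v : 'I_n) (r : Omega), EST x r = out v (x v) r (recv v x r)) ->
    (* unbiasedness: E[EST] = mu *)
    (forall x, valid_input k y x -> forall i : 'I_d,
       measurable_fun setT (fun r => EST x r 0 i) /\
       P.-integrable setT (fun r => (EST x r 0 i)%:E) /\
       (\int[P]_r (EST x r 0 i)%:E = (meanv x 0 i)%:E)%E) ->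
    exists x, valid_input k y x /\
      ((ratr c * y ^+ 2 * powR 2 (- (2 * b%:R / d%:R)))%:E
        <= \int[P]_r ((vnorm k (EST x r - meanv x)) ^+ 2)%:E)%E.
Proof.
exists (18432%:R^-1); split; first by rewrite invr_gt0 ltr0n.
move=> R n d b k y n2 d0 y0 dO Omega P recv out EST hbits hout hunb.
pose v0 : 'I_n := Ordinal (ltnW n2).
pose a := grid_step k b d y; pose c := a * ((n - 1)%:R / n%:R).
pose X (s : {ffun 'I_d -> 'I_(grid_size b d)}) := zero_at v0 (a *: grid_row R s).
have valid s : valid_input k y (X s) by apply: valid_grid_input.
have c0 : 0 <= c by apply: mulr_ge0; [apply: grid_step_ge0 | rewrite divr_ge0].
pose err s x := vnorm k (EST (X s) x - meanv (X s)) ^+ 2.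
have [s hs] : exists s, (((c * vnorm_ones R d k) ^+ 2 / 2)%:E <= \int[P]_x (err s x)%:E)%E.
  apply: (exists_integral_ge_half P [ffun=> Ordinal (grid_size_gt0 b d)]) => [|s|s x|x].
  - exact: sqr_ge0.
  - apply: measurable_vnorm_sqr => j; under eq_fun do rewrite !mxE.
    by apply: measurable_funB; [apply: (hunb _ (valid s) j).1 | apply: measurable_cst].
  - exact: sqr_ge0.
  have -> : [set s | err s x < (c * vnorm_ones R d k) ^+ 2] =
      [set s | vnorm k (out v0 0 x (recv v0 (X s) x) - c *: grid_row R s) ^+ 2
                 < (c * vnorm_ones R d k) ^+ 2].
    apply/setP => s; rewrite !inE /err (hout _ (valid s) v0) [X s v0]/X /zero_at eqxx.
    by rewrite meanv_zero_at scalerA mulrC.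
  exact: card_close_estimates (fun s => hbits _ (valid s) v0 x).
exists (X s); split => //; apply: le_trans hs.
by rewrite lee_fin fmorphV rmorph_nat; apply: grid_error_ge.
Qed.
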